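(* Let $G$ be a beetle-free graph and let $C$ be a clean shortest even hole of $G$. Then $N_G(C)\subseteq N_G^{1,1}(C)\cup N_G^{1}(C)\cup N_G^{2}(C)\cup N_G^{3}(C)$.
   Context: All graphs are finite, simple and undirected. A hole is an induced simple cycle with at least four nodes; it is even if it has an even number of nodes. A shortest even hole of $G$ is an even hole of $G$ with the minimum number of nodes among all even holes of $G$. For a subgraph $C$ of $G$, $N_G(C)$ is the set of nodes of $V(G)\setminus V(C)$ adjacent to some node of $C$. For a hole $C$ of $G$ and a node $x\notin V(C)$, let $N_C(x)=N_G(x)\cap V(C)$. The node $x$ is a major node of $C$ if $N_C(x)$ contains three distinct pairwise non-adjacent nodes; $M_G(C)$ is the set of major nodes of $C$. For $x\in N_G(C)\setminus M_G(C)$: $x\in N_G^i(C)$ ($1\le i\le 4$) if $|N_C(x)|=i$ and $C[N_C(x)]$ is connected; $x\in N_G^{i,j}(C)$ ($1\le i\le j\le 2$) if $C[N_C(x)]$ has exactly two connected components, with $i$ and $j$ nodes respectively. The hole $C$ is clean if $M_G(C)=N_G^{2,2}(C)=\varnothing$. A diamond is a $4$-cycle $b_1b_2b_3b_4b_1$ with exactly one chord $b_2b_4$. An induced subgraph $B$ of $G$ is a beetle of $G$ if $B$ is exactly the union of (1) a diamond on nodes $b_1,b_2,b_3,b_4$ (cycle $b_1b_2b_3b_4b_1$, chord $b_2b_4$) and (2) a tree $I$ of $G\setminus\{b_4\}$ having exactly three leaves $b_1,b_2,b_3$, such that $I\setminus\{b_1,b_2,b_3\}$ is an induced tree of $G$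 not adjacent to $b_4$. $G$ is beetle-free if it has no beetle. *)

(* A finite simple graph is a symmetric irreflexive
   relation e : rel T on a finType T. *)
From mathcomp Require Import all_boot.
Set Implicit Arguments. Unset Strict Implicit. Unset Printing Implicit Defensive.

Section Graphs.
Variable T : finType.

Definition restr (r : rel T) (S : {set T}) : rel T :=
  [rel u v | [&& r u v, u \in S & v \in S]].

Definition connected_on (r : rel T) (S : {set T}) : Prop :=
  forall u v, u \in S -> v \in S -> connect (restr r S) u v.

Definition del_edge (r : rel T) (u v : T) : rel T :=
  [rel a b | r a b && ~~ (((a == u) && (b == v)) || ((a == v) && (b == u)))].

(* (S, F) is a tree: F is a symmetric edge relation with all endpoints in S,
   (S,F) is connected and acyclic (every edge is a bridge). *)
Definition is_tree (S : {set T}) (F : rel T) : Prop :=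
  symmetric F /\ (forall u v, F u v -> u \in S /\ v \in S) /\
  connected_on F S /\
  (forall u v, F u v -> ~ connect (restr (del_edge F u v) S) u v).

Definition leaves (S : {set T}) (F : rel T) : {set T} :=
  [set v in S | #|[set w | F v w]| == 1].

Variable e : rel T.

(* c = [:: v_0; ...; v_{k-1}] is a hole: an induced simple cycle, k >= 4 *)
Definition hole (c : seq T) : Prop :=
  uniq c /\ 4 <= size c /\
  forall i j : 'I_(size c),
    e (tnth (in_tuple c) i) (tnth (in_tuple c) j) =
    ((i.+1 %% size c == j) || (j.+1 %% size c == i)).

Definition even_hole (c : seq T) : Prop := hole c /\ ~~ odd (size c).

Definition shortest_even_hole (c : seq T) : Prop :=
  even_hole c /\ forall c', even_hole c' -> size c <= size c'.

Definition VC (c : seq T) : {set T} := [set x in c].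

Definition NG (c : seq T) : {set T} :=
  [set x | (x \notin c) && [exists y in VC c, e x y]].

Definition NC (c : seq T) (x : T) : {set T} := [set y in VC c | e x y].

Definition major (c : seq T) (x : T) : Prop :=
  x \notin c /\
  exists a b d, [/\ a \in NC c x, b \in NC c x & d \in NC c x] /\
    [/\ a != b, a != d & b != d] /\
    [/\ ~~ e a b, ~~ e a d & ~~ e b d].

Definition Ni (c : seq T) (i : nat) (x : T) : Prop :=
  x \in NG c /\ ~ major c x /\ #|NC c x| = i /\ connected_on e (NC c x).

(* x in N^{i,j}_G(C): C[N_C(x)] has exactly two components, of sizes i, j *)
Definition Nij (c : seq T) (i j : nat) (x : T) : Prop :=
  x \in NG c /\ ~ major c x /\
  exists A B : {set T},
    [/\ A :|: B = NC c x, [disjoint A & B], #|A| = i & #|B| = j] /\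
    connected_on e A /\ connected_on e B /\
    (forall a b, a \in A -> b \in B -> ~~ e a b).

Definition clean (c : seq T) : Prop :=
  (forall x, ~ major c x) /\ (forall x, ~ Nij c 2 2 x).

Definition diamond_edge (b1 b2 b3 b4 : T) (u v : T) : bool :=
  let E a b := ((u == a) && (v == b)) || ((u == b) && (v == a)) in
  [|| E b1 b2, E b2 b3, E b3 b4, E b4 b1 | E b2 b4].

(* G contains a beetle: a diamond on b1..b4 and a tree I = (S,F) of G \ b4
   with leaves exactly b1,b2,b3, such that I \ {b1,b2,b3} is an induced tree
   of G not adjacent to b4, and the induced subgraph on V(diamond) u V(I)
   has exactly the diamond edges and the tree edges. *)
Definition has_beetle : Prop :=
  exists (b1 b2 b3 b4 : T) (S : {set T}) (F : rel T),
    uniq [:: b1; b2; b3; b4] /\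
    [/\ e b1 b2, e b2 b3, e b3 b4, e b4 b1 & e b2 b4] /\ ~~ e b1 b3 /\
    b4 \notin S /\
    (forall u v, F u v -> e u v) /\
    is_tree S F /\
    leaves S F = [set b1; b2; b3] /\
    (let S' := S :\: [set b1; b2; b3] in
       (forall u v, u \in S' -> v \in S' -> F u v = e u v) /\
       is_tree S' (restr e S') /\
       (forall u, u \in S' -> ~~ e u b4)) /\
    (let W := S :|: [set b1; b2; b3; b4] in
       forall u v, u \in W -> v \in W ->
         e u v = diamond_edge b1 b2 b3 b4 u v || F u v).

Definition beetle_free : Prop := ~ has_beetle.

End Graphs.

From mathcomp Require Import all_boot zify.
Set Implicit Arguments. Unset Strict Implicit. Unset Printing Implicit Defensive.

(* Let x be a neighbour of the clean shortest even hole C = c_0 ... c_(n-1).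
   x cannot see all of C (for n = 4 this is a beetle, for n >= 6 x would be
   major), so C can be rotated to make x see c_0 but not c_(n-1).  If x sees
   none of c_2 ... c_(n-2) it lies in N^1 or N^2.  Otherwise let c_p be the first
   one; as x is not major, N_C(x) lies in {c_0, c_1, c_p, c_(p+1)}.  Of the
   resulting shapes, {c_0, c_p} is N^{1,1} and {c_0, c_1, c_2} is N^3;
   {c_0, c_1, c_p, c_(p+1)} is N^{2,2} (excluded by cleanness) or, for p = 2, four
   consecutive neighbours, which yield a beetle; and {c_0, c_1, c_p} (p > 2) or
   {c_0, c_p, c_(p+1)} splits C into two holes through x whose lengths have
   different parities, giving an even hole shorter than C. *)

(** * Trees *)

Section Trees.
Variable T : finType.
Implicit Types (r F : rel T) (S : {set T}).

Lemma restr_sym r S : symmetric r -> symmetric (restr r S).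
Proof. by move=> rsym u v; rewrite /restr /= rsym [(u \in S) && _]andbC. Qed.

Lemma connect_nth_path r (f : nat -> T) a b : a <= b ->
  (forall i, a <= i < b -> r (f i) (f i.+1)) -> connect r (f a) (f b).
Proof.
elim: b => [|b IHb] ab step; first by move: ab; rewrite leqn0 => /eqP ->.
case: (leqP a b) => [ab' | ba]; last by rewrite (_ : a = b.+1) //; lia.
apply: connect_trans (IHb ab' _) (connect1 (step b _)) => [i hi|]; last lia.
by apply: step; lia.
Qed.

Lemma connected_on_root r S z : symmetric r ->
  (forall u, u \in S -> connect (restr r S) z u) -> connected_on r S.
Proof.
move=> rsym zconn u v uS vS; apply: connect_trans (zconn v vS).
by rewrite (sym_connect_sym (restr_sym S rsym)) zconn.
Qed.

Lemma connected_on_restr r S : connected_on r S -> connected_on (restr r S) S.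
Proof.
move=> rconn u v uS vS; rewrite (@eq_connect _ _ (restr r S)) ?rconn // => a b.
by rewrite /restr /=; case: (a \in S); case: (b \in S); rewrite /= ?andbT ?andbF.
Qed.

Lemma not_connect_closed r S (L : pred T) u v :
  (forall a b, r a b -> L a = L b) -> L u != L v -> ~ connect (restr r S) u v.
Proof.
move=> Lr Luv uv; have Lclosed : closed (restr r S) L.
  by move=> a b /and3P [rab _ _]; apply: Lr.
have := closed_connect Lclosed uv; rewrite !unfold_in => Luv'.
by rewrite Luv' eqxx in Luv.
Qed.

Definition link (u v : T) : rel T :=
  [rel a b | ((a == u) && (b == v)) || ((a == v) && (b == u))].

Lemma link_sym u v : symmetric (link u v).
Proof.
move=> a b; rewrite /link /=.
by case: (a == u); case: (a == v); case: (b == u); case: (b == v).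
Qed.

Lemma del_edge_sym r u v : symmetric r -> symmetric (del_edge r u v).
Proof.
move=> rsym a b; rewrite /del_edge /= rsym.
by case: (a == u); case: (a == v); case: (b == u); case: (b == v).
Qed.

Definition add_leaf F (y z : T) : rel T := [rel a b | F a b || link y z a b].

Section AddLeaf.
Variables (S : {set T}) (F : rel T) (y z : T).
Hypotheses (treeF : is_tree S F) (yS : y \notin S) (zS : z \in S).

Let F_in a b : F a b -> a \in S /\ b \in S.
Proof. by case: treeF => _ [] F_in _; apply: F_in. Qed.

Let Fy w : F y w = false.
Proof. by apply/negbTE; apply: contra yS => /F_in [->]. Qed.

Let Fy' w : F w y = false.
Proof. by apply/negbTE; apply: contra yS => /F_in [_ ->]. Qed.

Let yz : y != z.
Proof. by apply: contraNneq yS => ->. Qed.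

Let S_neq w : w \in S -> w != y.
Proof. by move=> wS; apply: contraNneq yS => <-. Qed.

Lemma add_leaf_bridge a b : add_leaf F y z a b ->
  ~ connect (restr (del_edge (add_leaf F y z) a b) (y |: S)) a b.
Proof.
have [Fsym [_ [_ Fbr]]] := treeF.
case/orP => [Fab | lyz].
  have [/S_neq ay /S_neq b_y] := F_in Fab.
  pose L w := connect (restr (del_edge F a b) S) a (if w == y then z else w).
  apply: (@not_connect_closed _ _ L) => [p q /andP [/orP [Fpq | lpq] nab] |]; last first.
  - by rewrite /L (negbTE ay) (negbTE b_y) connect0; apply/eqP => /esym; apply: Fbr.
  - by case/orP: lpq => /andP [/eqP -> /eqP ->]; rewrite /L eqxx (eq_sym z) (negbTE yz).
  - have [pS qS] := F_in Fpq.
    rewrite /L (negbTE (S_neq pS)) (negbTE (S_neq qS)).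
    have pq : restr (del_edge F a b) S p q by rewrite /restr /del_edge /= Fpq pS qS nab.
    apply/idP/idP => /connect_trans; apply; apply: connect1 => //.
    by rewrite (restr_sym _ (del_edge_sym _ _ Fsym)).
apply: (@not_connect_closed _ _ (fun w => w == y)) => [p q /andP [/orP [Fpq | lpq] nab] |].
- by have [/S_neq /negbTE -> /S_neq /negbTE ->] := F_in Fpq.
- by case/orP: lyz => /andP [/eqP ea /eqP eb]; subst a b; case/negP: nab; rewrite // orbC.
- by case/orP: lyz => /andP [/eqP -> /eqP ->]; rewrite eqxx (eq_sym z) (negbTE yz).
Qed.

Let add_leaf_sym : symmetric (add_leaf F y z).
Proof. by case: treeF => Fsym _ a b; rewrite /add_leaf /= Fsym link_sym. Qed.

Lemma add_leaf_connected : connected_on (add_leaf F y z) (y |: S).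
Proof.
have [Fsym [_ [Fconn _]]] := treeF.
apply: (@connected_on_root _ _ z) => // w.
rewrite in_setU1 => /predU1P [-> | wS].
  by apply: connect1; rewrite /restr /add_leaf /link /= !inE zS !eqxx !orbT.
apply: connect_sub (Fconn _ _ zS wS) => a b /and3P [Fab aS bS].
by apply: connect1; rewrite /restr /add_leaf /= Fab !inE aS bS !orbT.
Qed.

Lemma tree_add_leaf : is_tree (y |: S) (add_leaf F y z).
Proof.
split=> //; split; last by split; [exact: add_leaf_connected | exact: add_leaf_bridge].
move=> a b /orP [/F_in [aS bS] | /orP [] /andP [/eqP -> /eqP ->]];
  by rewrite !inE ?aS ?bS ?zS ?eqxx ?orbT.
Qed.

Lemma leaves_add_leaf : (exists w, F z w) ->
  leaves (y |: S) (add_leaf F y z) = y |: (leaves S F :\ z).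
Proof.
case=> w0 Fzw0; apply/setP => w; rewrite /leaves !inE.
case: (w =P y) => [-> | /eqP wy] /=.
  have -> : [set v | add_leaf F y z y v] = [set z].
    by apply/setP => v; rewrite !inE /add_leaf /link /= Fy eqxx (negbTE yz) /= orbF.
  by rewrite cards1.
case: (w =P z) => [-> | /eqP wz] /=.
  rewrite zS /= (_ : [set v | _] = y |: [set v | F z v]); last first.
    by apply/setP => v; rewrite !inE /add_leaf /link /= (eq_sym z) (negbTE yz) eqxx orbC.
  rewrite cardsU1 inE Fy' /=; apply/negbTE; rewrite add1n eqSS -lt0n card_gt0.
  by apply/set0Pn; exists w0; rewrite inE.
rewrite (_ : [set v | _] = [set v | F w v]) // ; apply/setP => v.
by rewrite !inE /add_leaf /link /= (negbTE wy) (negbTE wz) orbF.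
Qed.
End AddLeaf.
End Trees.

(** * Positions on a cycle *)

Definition cycle_adj (n i j : nat) : bool :=
  [|| i.+1 == j, j.+1 == i, (i.+1 == n) && (j == 0) | (j.+1 == n) && (i == 0)].

Lemma cycle_adjE n i j : i < n -> j < n ->
  (i.+1 %% n == j) || (j.+1 %% n == i) = cycle_adj n i j.
Proof.
have succ_mod a b : a < n -> b < n ->
    (a.+1 %% n == b) = (a.+1 == b) || (a.+1 == n) && (b == 0).
  move=> ha hb; case: (ltngtP a.+1 n) => h; last 2 first.
  - lia.
  - by rewrite h modnn; apply/idP/idP; lia.
  by rewrite modn_small //; apply/idP/idP; lia.
by move=> hi hj; rewrite !succ_mod //; apply/idP/idP; rewrite /cycle_adj; lia.
Qed.

Definition rot_pos (n k i : nat) : nat := if k + i < n then k + i else k + i - n.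

Lemma rot_pos_lt n k i : k <= n -> i < n -> rot_pos n k i < n.
Proof. by rewrite /rot_pos; case: ifP; lia. Qed.

Lemma nth_rot (T : Type) (x0 : T) (c : seq T) k i : k <= size c -> i < size c ->
  nth x0 (rot k c) i = nth x0 c (rot_pos (size c) k i).
Proof.
move=> hk hi; rewrite /rot nth_cat size_drop /rot_pos.
case: ifP => h; first by rewrite nth_drop ifT //; lia.
by rewrite nth_take ?ifF; [congr nth | |]; lia.
Qed.

(* [rot_pos n k n.-1] is the cyclic predecessor of position [k]. *)
Lemma exists_cyclic_rise (P : pred nat) n :
  (exists2 i, i < n & P i) -> (exists2 i, i < n & ~~ P i) ->
  exists k, [/\ k < n, P k & ~~ P (rot_pos n k n.-1)].
Proof.
move=> [i hin hPi] [j hjn hPj].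
have exP : exists i, P i by exists i.
case: (ex_minnP exP) => k hPk kmin.
have hkn : k < n by apply: leq_ltn_trans (kmin _ hPi) hin.
case: k hPk kmin hkn => [|k] hPk kmin hkn; last first.
  exists k.+1; split=> //; rewrite /rot_pos ifF; last by lia.
  by apply/negP => /kmin; rewrite (_ : _ - n = k) ?ltnn //; lia.
have exnP : exists j, (j < n) && ~~ P j by exists j; rewrite hjn.
have bnd j' : (j' < n) && ~~ P j' -> j' <= n.-1 by case/andP; lia.
case: (ex_maxnP exnP bnd) => m /andP [hmn hPm] mmax.
case: (m =P n.-1) => [mlast | /eqP mlast].
  by exists 0; split; rewrite // /rot_pos add0n ifT -?mlast //; lia.
exists m.+1; split; first lia.
- apply/negPn/negP => hP; suff : m.+1 <= m by rewrite ltnn.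
  by apply: mmax; rewrite hP andbT; lia.
- rewrite /rot_pos ifF; last lia.
  by rewrite (_ : _ - n = m); last lia.
Qed.

(** * Holes and their neighbours *)

Section Holes.
Variables (T : finType) (e : rel T).
Hypotheses (e_sym : symmetric e) (e_irr : irreflexive e).

Lemma hole_adj (c : seq T) x0 i j : hole e c -> i < size c -> j < size c ->
  e (nth x0 c i) (nth x0 c j) = cycle_adj (size c) i j.
Proof.
case=> _ [_ adj] hi hj; have := adj (Ordinal hi) (Ordinal hj).
by rewrite !(tnth_nth x0) /= => ->; rewrite cycle_adjE.
Qed.

Lemma hole_of_adj (c : seq T) x0 : uniq c -> 4 <= size c ->
  (forall i j, i < size c -> j < size c ->
     e (nth x0 c i) (nth x0 c j) = cycle_adj (size c) i j) -> hole e c.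
Proof.
move=> uc c4 adj; do 2!split=> //.
by move=> i j; rewrite !(tnth_nth x0) adj // cycle_adjE.
Qed.

Lemma hole_rot (c : seq T) k : hole e c -> k <= size c -> hole e (rot k c).
Proof.
case: c => [|x0 c'] hc hk; first by case: hc => _ [].
have [uc [c4 _]] := hc.
apply: (@hole_of_adj _ x0); rewrite ?rot_uniq ?size_rot // => i j hi hj.
rewrite !nth_rot // hole_adj ?rot_pos_lt //.
by rewrite /cycle_adj /rot_pos; case: ifP => ?; case: ifP => ?; apply/idP/idP; lia.
Qed.

Lemma shortest_even_hole_rot (c : seq T) k : shortest_even_hole e c -> k <= size c ->
  shortest_even_hole e (rot k c).
Proof.
move=> [[hc ev] shortest] hk; rewrite /shortest_even_hole /even_hole size_rot.
by split; [split; first exact: hole_rot | move=> h /shortest].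
Qed.

Definition attaches (c : seq T) (x : T) (P : pred nat) : Prop :=
  forall i, i < size c -> e x (nth x c i) = P i.

Lemma attaches_rot (c : seq T) x P k : k <= size c -> attaches c x P ->
  attaches (rot k c) x (fun i => P (rot_pos (size c) k i)).
Proof. by move=> hk hP i; rewrite size_rot => hi; rewrite nth_rot // hP // rot_pos_lt. Qed.

Lemma hole_cons_take (c : seq T) x m : hole e c -> x \notin c -> 3 <= m < size c ->
  (forall i, i < m -> e x (nth x c i) = (i == 0) || (i == m.-1)) ->
  hole e (x :: take m c).
Proof.
move=> hc xc hm hx; have [uc _] := hc.
have sz : size (take m c) = m by rewrite size_take ifT //; lia.
apply: (@hole_of_adj _ x); rewrite /= ?sz.
- by rewrite take_uniq ?andbT //; apply: contra xc; apply: mem_take.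
- lia.
case=> [|i] [|j] hi hj /=.
- by rewrite e_irr /cycle_adj; apply/esym/idP; lia.
- by rewrite nth_take ?hx /cycle_adj; [apply/idP/idP | |]; lia.
- by rewrite e_sym nth_take ?hx /cycle_adj; [apply/idP/idP | |]; lia.
- rewrite !nth_take ?hole_adj //; try lia.
  by rewrite /cycle_adj; apply/idP/idP; lia.
Qed.

Lemma eq_NC (c c' : seq T) x : c =i c' -> NC e c x = NC e c' x.
Proof. by move=> cc'; apply/setP=> y; rewrite !inE cc'. Qed.

Lemma eq_NG (c c' : seq T) : c =i c' -> NG e c = NG e c'.
Proof.
move=> cc'; apply/setP=> y; rewrite !inE cc'; congr (_ && _).
by apply: eq_existsb => z; rewrite !inE cc'.
Qed.

Lemma eq_major (c c' : seq T) x : c =i c' -> major e c x <-> major e c' x.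
Proof. by move=> cc'; rewrite /major (eq_NC x cc') cc'. Qed.

Lemma eq_Ni (c c' : seq T) i x : c =i c' -> Ni e c i x -> Ni e c' i x.
Proof.
move=> cc' [xN [nm hN]]; rewrite /Ni -(eq_NG cc') -(eq_NC x cc').
by split=> //; split=> //; rewrite -(eq_major x cc').
Qed.

Lemma eq_Nij (c c' : seq T) i j x : c =i c' -> Nij e c i j x -> Nij e c' i j x.
Proof.
move=> cc' [xN [nm hN]]; rewrite /Nij -(eq_NG cc') -(eq_NC x cc').
by split=> //; split=> //; rewrite -(eq_major x cc').
Qed.

Lemma eq_clean (c c' : seq T) : c =i c' -> clean e c -> clean e c'.
Proof.
move=> cc' [nomaj no22]; have c'c : c' =i c by move=> y; rewrite cc'.
by split=> x; [move/(eq_major x c'c); apply: nomaj | move/(eq_Nij c'c); apply: no22].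
Qed.

(* [nth_uniq] and [index_uniq] restated for [seq T]: their side conditions then
   mention the same [size c] as the context, which [lia] relies on. *)
Lemma nth_eq_nth (c : seq T) x0 i j : uniq c -> i < size c -> j < size c ->
  (nth x0 c i == nth x0 c j) = (i == j).
Proof. by move=> uc hi hj; rewrite nth_uniq. Qed.

Lemma index_nth_uniq (c : seq T) x0 i : uniq c -> i < size c -> index (nth x0 c i) c = i.
Proof. by move=> uc hi; rewrite index_uniq. Qed.

Lemma nth_eq_out (c : seq T) x i : x \notin c -> i < size c -> (nth x c i == x) = false.
Proof. by move=> xc hi; apply: contraNF xc => /eqP <-; rewrite mem_nth. Qed.

Lemma nth_of_mem (c : seq T) x0 y : y \in c -> exists2 k, k < size c & y = nth x0 c k.
Proof. by move=> yc; exists (index y c); rewrite ?index_mem ?nth_index. Qed.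

Lemma major_intro (c : seq T) x i j k : hole e c -> x \notin c ->
  [&& i < size c, j < size c & k < size c] ->
  [/\ e x (nth x c i), e x (nth x c j) & e x (nth x c k)] ->
  [&& i != j, i != k & j != k] ->
  [&& ~~ cycle_adj (size c) i j, ~~ cycle_adj (size c) i k & ~~ cycle_adj (size c) j k] ->
  major e c x.
Proof.
move=> hc xc /and3P [hi hj hk] [xi xj xk] /and3P [ij ik jk] /and3P [aij aik ajk].
have [uc _] := hc; split=> //; exists (nth x c i), (nth x c j), (nth x c k).
split; first by split; rewrite !inE mem_nth.
by split; [split; rewrite nth_eq_nth | split; rewrite hole_adj].
Qed.

Definition arc (c : seq T) (a m : nat) : {set T} := [set y in take m (drop a c)].

Lemma arc_nthP (c : seq T) x0 a m y : a + m <= size c ->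
  reflect (exists2 i, a <= i < a + m & y = nth x0 c i) (y \in arc c a m).
Proof.
move=> am; have sz : size (take m (drop a c)) = m by rewrite size_takel // size_drop; lia.
rewrite inE; apply: (iffP (nthP x0)) => [[j] | [i hi ->]]; rewrite sz.
  by move=> hj <-; exists (a + j); rewrite ?nth_take ?nth_drop //; lia.
by exists (i - a); [lia | rewrite nth_take ?nth_drop; [congr nth | ]; lia].
Qed.

Lemma mem_arc_nth (c : seq T) x0 a m i : uniq c -> a + m <= size c -> i < size c ->
  (nth x0 c i \in arc c a m) = (a <= i < a + m).
Proof.
move=> uc am hi; apply/(arc_nthP x0 _ am)/idP => [[j hj /eqP] | hai].
  by rewrite nth_eq_nth //; [move/eqP -> | lia].
by exists i.
Qed.

Lemma card_arc (c : seq T) a m : uniq c -> a + m <= size c -> #|arc c a m| = m.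
Proof.
move=> uc am; rewrite cardsE (card_uniqP _); last by rewrite take_uniq ?drop_uniq.
by rewrite size_takel // size_drop; lia.
Qed.

Lemma arc_adj (c : seq T) x0 a m i j : hole e c -> a + m <= size c -> m < size c ->
  a <= i < a + m -> a <= j < a + m ->
  e (nth x0 c i) (nth x0 c j) = (i.+1 == j) || (j.+1 == i).
Proof.
move=> hc am mn hi hj; rewrite hole_adj //; [|lia|lia].
by rewrite /cycle_adj; apply/idP/idP; lia.
Qed.

Lemma arc_connected (c : seq T) a m : hole e c -> a + m <= size c ->
  connected_on e (arc c a m).
Proof.
move=> hc am u v uA vA; have [uc _] := hc.
(* a copy of [u] without body: a default for [nth] that survives rewriting [u] *)
have x0 : T := u.
have [i hi ->] := arc_nthP x0 _ am uA; have [j hj ->] := arc_nthP x0 _ am vA.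
wlog ij : i j hi hj / i <= j.
  move=> ord; case: (leqP i j) => [|ji]; first exact: ord.
  by rewrite (sym_connect_sym (restr_sym _ e_sym)); apply: ord; lia.
apply: (connect_nth_path (f := nth x0 c)) ij _ => k hk.
rewrite /restr /= !mem_arc_nth // ?hole_adj //; try lia.
by rewrite /cycle_adj; apply/and3P; split; lia.
Qed.

Lemma arc_tree (c : seq T) a m : hole e c -> a + m <= size c -> m < size c ->
  is_tree (arc c a m) (restr e (arc c a m)).
Proof.
move=> hc am mn; have [uc _] := hc.
split; first exact: restr_sym.
split; first by move=> u v /and3P [].
split; first exact/connected_on_restr/arc_connected.
move=> u v /and3P [euv uA vA]; have x0 : T := u.
have [i hi eu] := arc_nthP x0 _ am uA; have [j hj ev] := arc_nthP x0 _ am vA; subst u v.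
rewrite (arc_adj x0 hc am mn hi hj) in euv.
apply: (@not_connect_closed _ _ _ (fun w => index w c <= minn i j)); last first.
  by rewrite !index_nth_uniq //; try lia.
move=> p q /andP [/and3P [epq pA qA] npq].
have [k hk ep] := arc_nthP x0 _ am pA; have [l hl eq] := arc_nthP x0 _ am qA; subst p q.
by move: epq npq; rewrite (arc_adj x0 hc am mn hk hl) !nth_eq_nth ?index_nth_uniq //; lia.
Qed.

Lemma arc_leaves (c : seq T) x0 a m : hole e c -> a + m <= size c -> 2 <= m < size c ->
  leaves (arc c a m) (restr e (arc c a m)) = [set nth x0 c a; nth x0 c (a + m).-1].
Proof.
move=> hc am /andP [m2 mn]; have [uc _] := hc; set A := arc c a m.
have nbrP i v : a <= i < a + m -> restr e A (nth x0 c i) v ->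
    exists2 j, (a <= j < a + m) && ((i.+1 == j) || (j.+1 == i)) & v = nth x0 c j.
  move=> hi /and3P [ev _ vA]; have [j hj evj] := arc_nthP x0 _ am vA.
  by exists j => //; rewrite hj -(arc_adj x0 hc am mn hi hj) -evj.
have nbrI i j : a <= i < a + m -> a <= j < a + m -> (i.+1 == j) || (j.+1 == i) ->
    restr e A (nth x0 c i) (nth x0 c j).
  by move=> hi hj ij; rewrite /restr /= (arc_adj x0 hc am mn hi hj) ij !mem_arc_nth //; lia.
apply/setP => w; rewrite /leaves inE in_set2.
case: (boolP (w \in A)) => wA /=; last first.
  by apply/esym/negbTE; apply: contraNN wA => /orP [] /eqP ->; rewrite mem_arc_nth //; lia.
have [i hi ->] := arc_nthP x0 _ am wA.
rewrite !nth_eq_nth //; try lia.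
case: (boolP ((i == a) || (i == (a + m).-1))) => i_end.
  have deg1 j : a <= j < a + m ->
      (forall k, a <= k < a + m -> (i.+1 == k) || (k.+1 == i) = (k == j)) ->
      #|[set v | restr e A (nth x0 c i) v]| == 1.
    move=> hj jE.
    rewrite (_ : [set v | restr e A (nth x0 c i) v] = [set nth x0 c j]) ?cards1 //.
    apply/setP => v; rewrite !inE.
    apply/idP/idP => [/(nbrP _ _ hi) [k /andP [hk ik] ->] | /eqP ->].
      by rewrite (nth_eq_nth x0 uc) -?jE //; lia.
    by apply: nbrI; rewrite // jE ?eqxx.
  by case/orP: i_end => /eqP ei; [apply: (deg1 a.+1) | apply: (deg1 (a + m).-2)];
    try move=> k hk; try apply/idP/idP; lia.
apply/negbTE; rewrite neq_ltn; apply/orP; right.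
apply: leq_trans (subset_leq_card (_ : [set nth x0 c i.-1; nth x0 c i.+1] \subset _)).
  by rewrite cards2 nth_eq_nth //; lia.
by apply/subsetP => v; rewrite !inE => /orP [] /eqP ->; apply: nbrI; lia.
Qed.

Lemma arc_sub (c : seq T) a m : {subset arc c a m <= c}.
Proof. by move=> y; rewrite inE => /mem_take /mem_drop. Qed.

Lemma NC_attaches (c : seq T) x P (B : {set T}) : attaches c x P -> {subset B <= c} ->
  (forall i, i < size c -> (nth x c i \in B) = P i) -> NC e c x = B.
Proof.
move=> hx Bc hB; apply/setP => y; rewrite !inE.
case: (boolP (y \in c)) => yc /=; last by apply/esym/negbTE; apply: contra yc; apply: Bc.
by rewrite -(nth_index x yc) hx ?hB ?index_mem.
Qed.

Lemma Ni_of_attaches (c : seq T) x m : hole e c -> x \in NG e c -> ~ major e c x ->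
  m <= size c -> attaches c x (fun i => i < m) -> Ni e c m x.
Proof.
move=> hc xN nm mn hx; have [uc _] := hc; rewrite /Ni.
have -> : NC e c x = arc c 0 m.
  by apply: (NC_attaches hx (@arc_sub c 0 m)) => i hi; rewrite mem_arc_nth.
by split=> //; split=> //; split; [apply: card_arc | apply: arc_connected].
Qed.

Lemma Nij_of_attaches (c : seq T) x s b t : hole e c -> x \in NG e c -> ~ major e c x ->
  s < b -> b + t < size c -> attaches c x (fun i => (i < s) || (b <= i < b + t)) ->
  Nij e c s t x.
Proof.
move=> hc xN nm sb btn hx; have [uc _] := hc; rewrite /Nij.
have sn : 0 + s <= size c by lia.
have btn' : b + t <= size c by lia.
have -> : NC e c x = arc c 0 s :|: arc c b t.
  apply: (NC_attaches hx) => [y | i hi]; first by rewrite inE => /orP [] /arc_sub.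
  by rewrite inE !mem_arc_nth.
split=> //; split=> //; exists (arc c 0 s), (arc c b t).
split; [split=> // | split; [exact: arc_connected | split; first exact: arc_connected]].
- apply/pred0P => y /=; apply/negbTE/negP => /andP [].
  move=> /(arc_nthP x _ sn) [i hi ->] /(arc_nthP x _ btn') [j hj /eqP].
  by rewrite nth_eq_nth //; lia.
- exact: card_arc.
- exact: card_arc.
move=> u v /(arc_nthP x _ sn) [i hi ->] /(arc_nthP x _ btn') [j hj ->].
by rewrite hole_adj /cycle_adj //; try lia; apply/negP; lia.
Qed.

(* The holes x c_0 ... c_q and x c_(q+1) ... c_(n-1) c_0 have lengths q + 2 and
   n - q + 1, of different parities when n is even. *)
Lemma shorter_even_hole (c : seq T) x q : hole e c -> x \notin c -> ~~ odd (size c) ->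
  2 <= q -> q + 3 <= size c -> attaches c x (fun i => [|| i == 0, i == q | i == q.+1]) ->
  exists2 h, even_hole e h & size h < size c.
Proof.
move=> hc xc ev q2 qn hx.
have sz m (d : seq T) : m <= size d -> size (x :: take m d) = m.+1.
  by move=> md; rewrite /= size_takel.
case: (boolP (odd q)) => oq.
  exists (x :: take (size c - q) (rot q.+1 c)); last by rewrite sz ?size_rot; lia.
  split; last by rewrite sz ?size_rot /= ?oddB ?(negbTE ev) ?oq //; lia.
  apply: hole_cons_take; rewrite ?mem_rot ?size_rot //; [apply: hole_rot hc _; lia | lia | ].
  move=> i hi; rewrite (attaches_rot _ hx) ?size_rot; try lia.
  by rewrite /rot_pos; case: ifP => ?; apply/idP/idP; lia.
exists (x :: take q.+1 c); last by rewrite sz; lia.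
split; last by rewrite sz /= ?negbK //; lia.
apply: hole_cons_take => //; first lia.
by move=> i hi; rewrite hx; [apply/idP/idP | ]; lia.
Qed.

(* The beetle: the diamond c_1 x c_(n-1) c_0 with chord x c_0, and the tree made
   of the path c_1 ... c_(n-1) together with the leaf x hanging at c_2. *)
Section BeetleFromFourNeighbours.
Variables (c : seq T) (x : T).
Hypotheses (hc : hole e c) (xc : x \notin c)
  (hx : attaches c x (fun i => (i <= 2) || (i == (size c).-1))).

Let uc : uniq c. Proof. by case: hc. Qed.
Let c4 : 4 <= size c. Proof. by case: hc => _ []. Qed.
Let A := arc c 1 (size c).-1.
Let S := x |: A.
Let F := add_leaf (restr e A) x (nth x c 2).

Let A_am : 1 + (size c).-1 <= size c. Proof. lia. Qed.

Let mem_A k : k < size c -> (nth x c k \in A) = (0 < k).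
Proof. by move=> hk; rewrite /A mem_arc_nth //; lia. Qed.

Let xA : x \notin A. Proof. by apply: contra xc; apply: arc_sub. Qed.

Let x_nth k : k < size c -> (x == nth x c k) = false.
Proof. by move=> hk; rewrite eq_sym nth_eq_out. Qed.

Let F_nth k l : k < size c -> l < size c ->
  F (nth x c k) (nth x c l) = [&& cycle_adj (size c) k l, 0 < k & 0 < l].
Proof.
move=> hk hl; rewrite /F /add_leaf /link /restr /= !nth_eq_out // hole_adj // !mem_A //.
by rewrite andbF !orbF.
Qed.

Let F_x_nth l : l < size c -> F x (nth x c l) = (l == 2).
Proof.
move=> hl; rewrite /F /add_leaf /link /restr /= (negbTE xA) eqxx x_nth ?andbF /=; last lia.
by rewrite orbF nth_eq_nth //; lia.
Qed.

Let F_nth_x k : k < size c -> F (nth x c k) x = (k == 2).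
Proof.
move=> hk; rewrite /F /add_leaf /link /restr /= (negbTE xA) nth_eq_out //= eqxx andbT.
by rewrite nth_eq_nth //; lia.
Qed.

Lemma beetle_tree : is_tree S F.
Proof.
apply: tree_add_leaf => //; last by rewrite mem_A; lia.
by apply: arc_tree hc _ _; lia.
Qed.

Lemma beetle_leaves : leaves S F = [set nth x c 1; x; nth x c (size c).-1].
Proof.
have A_tree : is_tree A (restr e A) by apply: arc_tree hc _ _; lia.
have c2A : nth x c 2 \in A by rewrite mem_A; lia.
rewrite /S /F (leaves_add_leaf A_tree xA c2A); last first.
  by exists (nth x c 3); rewrite /restr /= hole_adj ?mem_A //; lia.
rewrite (arc_leaves x hc A_am); last lia.
rewrite (_ : (1 + (size c).-1).-1 = (size c).-1); last lia.
apply/setP => y; rewrite !inE.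
case: (y =P x) => [-> | _] /=; first by rewrite orbT.
case: (y =P nth x c 1) => [-> | _] /=; first by rewrite nth_eq_nth //; lia.
case: (y =P nth x c (size c).-1) => [-> | _] /=; last by rewrite andbF.
by rewrite nth_eq_nth //; lia.
Qed.

Lemma beetle_body_arc :
  S :\: [set nth x c 1; x; nth x c (size c).-1] = arc c 2 (size c - 3).
Proof.
apply/setP => y; rewrite in_setD /S !(in_setU1, in_setU, in_set1).
have out_arc a m w : w \notin c -> (w \in arc c a m) = false.
  by move=> wc; apply/negbTE; apply: contra wc; apply: arc_sub.
case: (y =P x) => [-> | _] /=; first by rewrite orbT out_arc.
case: (boolP (y \in c)) => yc; last by rewrite !out_arc // andbF.
have [k hk ->] := nth_of_mem x yc.
by rewrite mem_A ?mem_arc_nth ?nth_eq_nth //; lia.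
Qed.

Lemma beetle_body :
  let S' := S :\: [set nth x c 1; x; nth x c (size c).-1] in
  (forall u v, u \in S' -> v \in S' -> F u v = e u v) /\
  is_tree S' (restr e S') /\ (forall u, u \in S' -> ~~ e u (nth x c 0)).
Proof.
have am : 2 + (size c - 3) <= size c by lia.
rewrite /= beetle_body_arc; split; [|split].
- move=> u v /(arc_nthP x _ am) [k hk ->] /(arc_nthP x _ am) [l hl ->].
  by rewrite F_nth ?hole_adj //; try lia; apply/idP/idP; lia.
- by apply: arc_tree hc _ _; lia.
- move=> u /(arc_nthP x _ am) [k hk ->].
  by rewrite hole_adj //; try lia; rewrite /cycle_adj; apply/negP; lia.
Qed.

Lemma beetle_induced :
  let W := S :|: [set nth x c 1; x; nth x c (size c).-1; nth x c 0] in
  forall u v, u \in W -> v \in W ->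
  e u v = diamond_edge (nth x c 1) x (nth x c (size c).-1) (nth x c 0) u v || F u v.
Proof.
move=> W u v.
have [h0 h1 h2 hn] : [/\ 0 < size c, 1 < size c, 2 < size c & (size c).-1 < size c].
  by split; lia.
have inW w : w \in W -> w = x \/ exists2 k, k < size c & w = nth x c k.
  case: (w =P x) => [-> | /eqP wx] wW; [by left | right; apply: nth_of_mem].
  move: wW; rewrite /W /S !inE (negbTE wx) /=.
  case/or3P => [/mem_take /mem_drop wc | /orP [/orP [] | ] | ] // /eqP ->;
    by rewrite mem_nth.
move=> /inW [-> | [k hk ->]] /inW [-> | [l hl ->]]; rewrite /diamond_edge /=.
- by rewrite e_irr /F /add_leaf /link /restr /= (negbTE xA) !x_nth // !andbF.
- rewrite hx // F_x_nth // ?x_nth // ?nth_eq_out // ?eqxx ?nth_eq_nth //.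
  by apply/idP/idP; lia.
- rewrite e_sym hx // F_nth_x // ?x_nth // ?nth_eq_out // ?eqxx ?nth_eq_nth //.
  by apply/idP/idP; lia.
- rewrite hole_adj // F_nth // ?x_nth // ?nth_eq_out // ?nth_eq_nth //.
  by rewrite /cycle_adj; apply/idP/idP; lia.
Qed.

Lemma has_beetle_of_attaches : has_beetle e.
Proof.
have [h0 h1 h2 hn] : [/\ 0 < size c, 1 < size c, 2 < size c & (size c).-1 < size c].
  by split; lia.
exists (nth x c 1), x, (nth x c (size c).-1), (nth x c 0), S, F.
split; first by rewrite /= !inE ?nth_eq_nth ?nth_eq_out ?x_nth //; lia.
split.
  by split; [rewrite e_sym | | | | ]; rewrite ?hx ?hole_adj // /cycle_adj; lia.
split; first by rewrite hole_adj // /cycle_adj; lia.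
split; first by rewrite /S in_setU1 nth_eq_out // mem_A.
split.
  move=> u v /orP [/and3P [] // | /orP [] /andP [/eqP -> /eqP ->]].
    by rewrite hx.
  by rewrite e_sym hx.
split; first exact: beetle_tree.
split; first exact: beetle_leaves.
split; [exact: beetle_body | exact: beetle_induced].
Qed.

End BeetleFromFourNeighbours.

Lemma attaches_ext (c : seq T) x P Q : attaches c x P ->
  (forall i, i < size c -> P i = Q i) -> attaches c x Q.
Proof. by move=> hx PQ i hi; rewrite hx // PQ. Qed.

Section NormalizedAttachment.
Variables (c : seq T) (x : T).
Hypotheses (hc : hole e c) (xc : x \notin c) (xN : x \in NG e c) (nomaj : ~ major e c x)
  (x_first : e x (nth x c 0)) (x_last : ~~ e x (nth x c (size c).-1)).

Let c4 : 4 <= size c. Proof. by case: hc => _ []. Qed.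

Lemma Ni_no_middle : (forall q, 1 < q < (size c).-1 -> ~~ e x (nth x c q)) ->
  Ni e c 1 x \/ Ni e c 2 x.
Proof.
move=> no_mid.
have hx i : i < size c -> e x (nth x c i) = (i == 0) || (i == 1) && e x (nth x c 1).
  move=> hi; case: (i =P 0) => [-> // | /eqP i0]; case: (i =P 1) => [-> // | /eqP i1].
  case: (i =P (size c).-1) => [-> | /eqP ilast]; first exact/negbTE.
  by apply/negbTE/no_mid; lia.
case b1: (e x (nth x c 1)); [right | left]; apply: Ni_of_attaches => //; try lia;
  by move=> i hi; rewrite hx // b1; apply/idP/idP; lia.
Qed.

(* The positions seen by x when c_p is its first neighbour among c_2 ... c_(n-2):
   0 and p, and also 1 and p + 1 according to b1 and b2. *)
Definition first_middle_pattern (p : nat) (b1 b2 : bool) : pred nat :=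
  fun i => [|| i == 0, (i == 1) && b1, i == p | (i == p.+1) && b2].

Lemma attaches_first_middle p : 1 < p < (size c).-1 -> e x (nth x c p) ->
  (forall i, 1 < i < p -> ~~ e x (nth x c i)) ->
  attaches c x (first_middle_pattern p (e x (nth x c 1)) (e x (nth x c p.+1))).
Proof.
move=> hp xp before i hi.
have far : p.+1 < i < (size c).-1 -> ~~ e x (nth x c i).
  move=> hpi; apply/negP => xi; apply: nomaj.
  by apply: (@major_intro _ _ 0 p i) => //; rewrite ?/cycle_adj; lia.
rewrite /first_middle_pattern.
case: (i =P 1) => [-> | /eqP i1].
  by case: (e x (nth x c 1)); case: (e x (nth x c p.+1)) => /=; lia.
case: (i =P p.+1) => [-> | /eqP ip1].
  by case: (e x (nth x c 1)); case: (e x (nth x c p.+1)) => /=; rewrite ?eqxx ?orbT //; lia.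
case: (i =P 0) => [-> // | /eqP i0]; case: (i =P p) => [-> | /eqP ip].
  by rewrite xp /= ?orbT.
apply/negbTE.
case: (i =P (size c).-1) => [-> // | /eqP ilast].
by case: (ltnP i p) => ?; [apply: before | apply: far]; lia.
Qed.

Lemma classify_first_middle p (b1 b2 : bool) :
  beetle_free e -> clean e c -> shortest_even_hole e c ->
  1 < p -> p.+1 < size c -> (b2 -> p.+2 < size c) ->
  attaches c x (first_middle_pattern p b1 b2) -> Nij e c 1 1 x \/ Ni e c 3 x.
Proof.
move=> bf [_ no22] [[_ ev] shortest] p1 pn pn2 hx.
have no_shorter h : even_hole e h -> size h < size c -> False by move=> /shortest; lia.
have pc : p <= size c by lia.
case: b1 b2 pn2 hx => [] [] pn2 hx.
- have {}pn2 := pn2 isT; exfalso; case: (p =P 2) => [p2 | /eqP p2].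
    apply: bf; apply: (@has_beetle_of_attaches (rot 1 c) x); rewrite ?mem_rot //.
      by apply: hole_rot hc _; lia.
    apply: attaches_ext (attaches_rot _ hx) _ => [|i]; rewrite ?size_rot; first lia.
    move=> hi; rewrite /first_middle_pattern /rot_pos.
    by case: ifP => ?; apply/idP/idP; lia.
  apply: (no22 x); apply: (Nij_of_attaches (b := p)) => //; [lia | lia | ].
  by apply: attaches_ext hx _ => i hi; rewrite /first_middle_pattern; apply/idP/idP; lia.
- case: (p =P 2) => [p2 | /eqP p2].
    right; apply: Ni_of_attaches => //; first lia.
    by apply: attaches_ext hx _ => i hi; rewrite /first_middle_pattern; apply/idP/idP; lia.
  exfalso; have [h h_even] : exists2 h, even_hole e h & size h < size (rot p c).
    apply: (@shorter_even_hole _ x (size c - p)); rewrite ?mem_rot ?size_rot //;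
      [exact: hole_rot | lia | lia | ].
    apply: attaches_ext (attaches_rot _ hx) _ => // i; rewrite ?size_rot => hi.
    by rewrite /first_middle_pattern /rot_pos; case: ifP => ?; apply/idP/idP; lia.
  by rewrite size_rot; apply: no_shorter.
- exfalso; have [h h_even] : exists2 h, even_hole e h & size h < size c.
    apply: (shorter_even_hole hc xc ev p1); first by have := pn2 isT; lia.
    by apply: attaches_ext hx _ => i hi; rewrite /first_middle_pattern; apply/idP/idP; lia.
  exact: no_shorter.
- left; apply: (Nij_of_attaches (b := p)) => //; first lia.
  by apply: attaches_ext hx _ => i hi; rewrite /first_middle_pattern; apply/idP/idP; lia.
Qed.

Lemma classify_normalized : beetle_free e -> clean e c -> shortest_even_hole e c ->
  Nij e c 1 1 x \/ Ni e c 1 x \/ Ni e c 2 x \/ Ni e c 3 x.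
Proof.
move=> bf cl sh.
case: (boolP [exists q : 'I_(size c), (1 < q < (size c).-1) && e x (nth x c q)]); last first.
  move/existsPn => no_mid.
  have no_mid' q : 1 < q < (size c).-1 -> ~~ e x (nth x c q).
    move=> hq; have qn : q < size c by lia.
    by have := no_mid (Ordinal qn); rewrite /= hq.
  by case: (Ni_no_middle no_mid') => ?; [right; left | right; right; left].
case/existsP => q0 /andP [hq0 xq0].
have ex_mid : exists q, (1 < q < (size c).-1) && e x (nth x c q) by exists q0; rewrite hq0.
case: (ex_minnP ex_mid) => p /andP [hp xp] pmin.
have before i : 1 < i < p -> ~~ e x (nth x c i).
  move=> hi; apply/negP => xi; suff : p <= i by lia.
  by apply: pmin; rewrite xi andbT; lia.
have last_b2 : e x (nth x c p.+1) -> p.+2 < size c.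
  move=> xp1; case: (p.+1 =P (size c).-1) => [p1last | ]; last lia.
  by move: x_last; rewrite -p1last xp1.
have [p1 pn] : 1 < p /\ p.+1 < size c by lia.
have := attaches_first_middle hp xp before.
by case/(classify_first_middle bf cl sh p1 pn last_b2) => ?; [left | right; right; right].
Qed.

End NormalizedAttachment.

Lemma exists_nonneighbour (c : seq T) x : hole e c -> x \notin c -> ~~ odd (size c) ->
  beetle_free e -> ~ major e c x -> exists2 i, i < size c & ~~ e x (nth x c i).
Proof.
move=> hc xc ev bf nomaj; have [_ [c4 _]] := hc.
case: (boolP [forall i : 'I_(size c), e x (nth x c i)]); last first.
  by case/forallPn => -[i hi] /= xi; exists i.
move/forallP => all_nbr; have x_all i : i < size c -> e x (nth x c i).
  by move=> hi; apply: (all_nbr (Ordinal hi)).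
exfalso; case: (size c =P 4) => [c_eq4 | /eqP c_neq4].
  apply/bf/(has_beetle_of_attaches hc xc) => i hi.
  by rewrite x_all //; apply/esym/idP; lia.
have c_neq5 : size c != 5 by apply: contraNneq ev => ->.
apply: nomaj; apply: (@major_intro _ _ 0 2 4) => //; rewrite ?x_all ?/cycle_adj //; lia.
Qed.
End Holes.

Theorem lemma3 (T : finType) (e : rel T) (e_sym : symmetric e)
    (e_irr : irreflexive e) (c : seq T) :
  beetle_free e -> clean e c -> shortest_even_hole e c ->
  forall x, x \in NG e c ->
    Nij e c 1 1 x \/ Ni e c 1 x \/ Ni e c 2 x \/ Ni e c 3 x.
Proof.
move=> bf cl sh x xN; have [[hc ev] _] := sh.
have := xN; rewrite inE => /andP [xc /existsP [y /andP [yc xy]]]; rewrite inE in yc.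
have x_nbr : exists2 i, i < size c & e x (nth x c i).
  by have [i hi eyi] := nth_of_mem x yc; exists i; rewrite -?eyi.
have [k [hk xk xk']] := exists_cyclic_rise x_nbr
  (exists_nonneighbour e_sym e_irr hc xc ev bf (cl.1 x)).
have rot_mem : rot k c =i c := mem_rot k c.
have mem_rot' : c =i rot k c by move=> z; rewrite mem_rot.
have x_first : e x (nth x (rot k c) 0) by rewrite nth_rot /rot_pos ?addn0 ?hk //; lia.
have x_last : ~~ e x (nth x (rot k c) (size (rot k c)).-1).
  by rewrite size_rot nth_rot //; lia.
have xc' : x \notin rot k c by rewrite mem_rot.
have xN' : x \in NG e (rot k c) by rewrite -(eq_NG e mem_rot').
have nomaj' : ~ major e (rot k c) x by move/(eq_major e x rot_mem); apply: cl.1.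
have := classify_normalized e_sym e_irr (hole_rot hc (ltnW hk)) xc' xN' nomaj'
  x_first x_last bf (eq_clean mem_rot' cl) (shortest_even_hole_rot sh (ltnW hk)).
by case=> [/(eq_Nij rot_mem) | [/(eq_Ni rot_mem) | [/(eq_Ni rot_mem) | /(eq_Ni rot_mem)]]];
  tauto.
Qed.
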